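(* Let $n\ge4$, $0<\alpha_2,\alpha_3<1$, $\alpha_1=1-\alpha_2-\alpha_3$, $\lambda^*=\big(\frac{n-1+\alpha_1}{n},\frac{\alpha_2}{n},\frac{\alpha_3}{n}\big)$. Then $$\sum_{\substack{i\in I\\ i_2\ge1,\ i_3\ge1}}|l_i(\lambda^* )|\le\frac{5\cdot2^{n+1}}{e\,n(\ln n-1)}\Big(1+\frac{15}{n-3}\Big).$$
   Context: For an integer $n\ge1$ let $I=\{i=(i_1,i_2,i_3)\in\mathbb{Z}_+^3: i_1+i_2+i_3=n\}$ and $l_i(\lambda)=\prod_{s=1}^{3}\frac{1}{i_s!}\prod_{t=0}^{i_s-1}(n\lambda_s-t)$ for $\lambda=(\lambda_1,\lambda_2,\lambda_3)$ (Lagrange fundamental polynomials for the equally spaced nodes $i/n$ of a triangle in barycentric coordinates). *)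

From Stdlib Require Import Reals List Arith Bool.
Import ListNotations.
Open Scope R_scope.

Fixpoint fallprod (x : R) (k : nat) : R :=
  match k with
  | O => 1
  | S k' => fallprod x k' * (x - INR k')
  end.

Definition lfactor (n : nat) (lam : R) (k : nat) : R :=
  / INR (fact k) * fallprod (INR n * lam) k.

Definition idx := (nat * nat * nat)%type.
Definition i1 (i : idx) : nat := fst (fst i).
Definition i2 (i : idx) : nat := snd (fst i).
Definition i3 (i : idx) : nat := snd i.

Definition lagr (n : nat) (i : idx) (l1 l2 l3 : R) : R :=
  lfactor n l1 (i1 i) * lfactor n l2 (i2 i) * lfactor n l3 (i3 i).

(* I = { i in Z_+^3 : i1 + i2 + i3 = n }, as an explicit duplicate-free list *)
Definition Iset (n : nat) : list idx :=
  flat_map (fun a =>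
    flat_map (fun b => if (a + b <=? n)%nat then [((a, b), (n - a - b)%nat)] else [])
      (seq 0 (S n)))
    (seq 0 (S n)).

Definition sumR (l : list R) : R := fold_right Rplus 0 l.

From Stdlib Require Import Reals List Arith Bool Lra Lia Psatz.
Import ListNotations.
Open Scope R_scope.

(* At [lambda*] the Lagrange polynomial is a product of generalized binomial coefficients,
   [l_i = binom (n - a2 - a3) i1 * binom a2 i2 * binom a3 i3].  For [0 < b < 1] one has
   [|binom b k| = (b / k) prod_(1 <= m < k) (1 - b / m)], so these moduli sum to at most 1,
   and [binom (n - c) j <= binom n j * prod_(t < j) (1 - b / (n - t))].  As [i2 + i3 = n - i1],
   the larger of [i2], [i3] is at least [(n - i1) / 2]; estimating the products by powers via
   [1 - b / y <= ((y + 1) / y) ^ (-b)] bounds that factor times the first one by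
   [binom n i1 * 2 / ((n - i1) e ln ((n + 1) / 3))], while the smaller factor sums to at most 1.
   Finally [binom n j / (n - j)] is dominated by a combination of [binom (n + 1) j] and
   [binom (n + 2) j], whose row sums are powers of 2. *)

Lemma sumR_app l1 l2 : sumR (l1 ++ l2) = sumR l1 + sumR l2.
Proof. induction l1 as [|x l IH]; simpl; [lra|rewrite IH; lra]. Qed.

Lemma sumR_map_le {A} (f g : A -> R) l :
  (forall x, In x l -> f x <= g x) -> sumR (map f l) <= sumR (map g l).
Proof.
  induction l as [|x l IH]; simpl; intros H; [lra|].
  apply Rplus_le_compat; auto.
Qed.

Lemma sumR_map_plus {A} (f g : A -> R) l :
  sumR (map (fun x => f x + g x) l) = sumR (map f l) + sumR (map g l).
Proof. induction l as [|x l IH]; simpl; [lra|rewrite IH; lra]. Qed.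

Lemma sumR_map_scal {A} (c : R) (f : A -> R) l :
  sumR (map (fun x => c * f x) l) = c * sumR (map f l).
Proof. induction l as [|x l IH]; simpl; [lra|rewrite IH; lra]. Qed.

Lemma sumR_map_zero {A} (f : A -> R) l :
  (forall x, In x l -> f x = 0) -> sumR (map f l) = 0.
Proof. induction l as [|x l IH]; simpl; intros H; [lra|]. rewrite H, IH; auto; lra. Qed.

Lemma sumR_map_flat_map {A B} (F : B -> R) (G : A -> list B) l :
  sumR (map F (flat_map G l)) = sumR (map (fun x => sumR (map F (G x))) l).
Proof.
  induction l as [|x l IH]; simpl; [lra|]. rewrite map_app, sumR_app, IH; lra.
Qed.

Lemma sumR_map_filter {A} (F : A -> R) p l :
  sumR (map F (filter p l)) = sumR (map (fun x => if p x then F x else 0) l).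
Proof.
  induction l as [|x l IH]; simpl; [lra|]. destruct (p x); simpl; rewrite IH; lra.
Qed.

Definition ssum (f : nat -> R) (N : nat) : R := sumR (map f (seq 0 N)).

Lemma ssum_ext f g N : (forall k, (k < N)%nat -> f k = g k) -> ssum f N = ssum g N.
Proof.
  intros H. unfold ssum. f_equal. apply map_ext_in.
  intros k Hk. apply in_seq in Hk. apply H. lia.
Qed.

Lemma ssum_le f g N : (forall k, (k < N)%nat -> f k <= g k) -> ssum f N <= ssum g N.
Proof. intros H. apply sumR_map_le. intros k Hk. apply in_seq in Hk. apply H. lia. Qed.

Lemma ssum_plus f g N : ssum (fun k => f k + g k) N = ssum f N + ssum g N.
Proof. apply sumR_map_plus. Qed.

Lemma ssum_scal c f N : ssum (fun k => c * f k) N = c * ssum f N.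
Proof. apply sumR_map_scal. Qed.

Lemma ssum_Sr f N : ssum f (S N) = ssum f N + f N.
Proof. unfold ssum. rewrite seq_S, map_app, sumR_app. simpl. lra. Qed.

Lemma ssum_Sl f N : ssum f (S N) = f 0%nat + ssum (fun k => f (S k)) N.
Proof. unfold ssum. simpl. rewrite <- seq_shift, map_map. reflexivity. Qed.

Lemma ssum_rev f N : ssum f N = ssum (fun k => f (N - S k)%nat) N.
Proof.
  induction N as [|N IH]; [reflexivity|].
  rewrite ssum_Sr, ssum_Sl, IH. simpl. rewrite Nat.sub_0_r. lra.
Qed.

Lemma ssum_trunc f N M : (N <= M)%nat -> (forall k, (N <= k < M)%nat -> f k = 0) ->
  ssum f M = ssum f N.
Proof.
  intros HNM H. unfold ssum. replace M with (N + (M - N))%nat by lia.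
  rewrite seq_app, map_app, sumR_app, (sumR_map_zero _ (seq (0 + N) _)); [lra|].
  intros k Hk. apply in_seq in Hk. apply H. lia.
Qed.

Lemma ssum_window (h : nat -> R) n a :
  ssum (fun b => if (a + b <=? n)%nat && ((1 <=? b)%nat && (1 <=? n - a - b)%nat)
                 then h b else 0) (S n)
  = ssum (fun k => h (S k)) (n - a - 1).
Proof.
  rewrite ssum_Sl, andb_false_r, Rplus_0_l.
  rewrite (ssum_trunc _ (n - a - 1)); [|lia|].
  - apply ssum_ext. intros k Hk.
    replace (a + S k <=? n)%nat with true by (symmetry; apply Nat.leb_le; lia).
    replace (1 <=? n - a - S k)%nat with true by (symmetry; apply Nat.leb_le; lia).
    reflexivity.
  - intros k Hk.
    destruct (a + S k <=? n)%nat eqn:E; [|reflexivity].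
    apply Nat.leb_le in E.
    replace (1 <=? n - a - S k)%nat with false by (symmetry; apply Nat.leb_gt; lia).
    now rewrite !andb_false_r.
Qed.

Lemma sumR_filter_Iset (F : idx -> R) p n :
  sumR (map F (filter p (Iset n))) =
  ssum (fun a => ssum (fun b =>
      if (a + b <=? n)%nat && p ((a, b), (n - a - b)%nat)
      then F ((a, b), (n - a - b)%nat) else 0) (S n)) (S n).
Proof.
  rewrite sumR_map_filter. unfold Iset, ssum. rewrite sumR_map_flat_map.
  f_equal. apply map_ext. intros a. rewrite sumR_map_flat_map.
  f_equal. apply map_ext. intros b.
  destruct (a + b <=? n)%nat; simpl; lra.
Qed.

Definition gbinom (x : R) (k : nat) : R := / INR (fact k) * fallprod x k.

Lemma gbinom_0 x : gbinom x 0 = 1.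
Proof. unfold gbinom; simpl; lra. Qed.

Lemma gbinom_S x k : gbinom x (S k) = gbinom x k * (x - INR k) / INR (S k).
Proof.
  unfold gbinom. simpl fallprod. rewrite fact_simpl, mult_INR.
  assert (0 < INR (fact k)) by apply lt_0_INR, lt_O_fact.
  assert (INR (S k) <> 0) by (apply not_0_INR; lia).
  field. lra.
Qed.

Lemma gbinom_succ_mul x j : gbinom (x + 1) j * (x + 1 - INR j) = (x + 1) * gbinom x j.
Proof.
  induction j as [|j IH].
  - rewrite !gbinom_0; simpl; lra.
  - assert (INR (S j) <> 0) by (apply not_0_INR; lia).
    rewrite !gbinom_S.
    replace ((x + 1) * (gbinom x j * (x - INR j) / INR (S j)))
      with ((x + 1) * gbinom x j * (x - INR j) / INR (S j)) by (field; assumption).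
    rewrite <- IH, S_INR in *. field. assumption.
Qed.

Lemma gbinom_pascal x j : gbinom (x + 1) (S j) = gbinom x (S j) + gbinom x j.
Proof.
  assert (INR (S j) <> 0) by (apply not_0_INR; lia).
  rewrite !gbinom_S. unfold Rdiv at 1. rewrite gbinom_succ_mul, S_INR in *.
  field. assumption.
Qed.

Lemma gbinom_nat_above N j : (N < j)%nat -> gbinom (INR N) j = 0.
Proof.
  induction j as [|j IH]; intros H; [lia|].
  rewrite gbinom_S. destruct (Nat.eq_dec j N) as [->|Hj].
  - rewrite Rminus_diag. lra.
  - rewrite IH by lia. lra.
Qed.

Lemma gbinom_nat_nonneg N j : 0 <= gbinom (INR N) j.
Proof.
  induction j as [|j IH]; [rewrite gbinom_0; lra|].
  destruct (le_lt_dec j N) as [H|H].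
  - rewrite gbinom_S. apply Rmult_le_pos; [|left; apply Rinv_0_lt_compat, lt_0_INR; lia].
    apply Rmult_le_pos; [assumption|]. apply Rge_le, Rge_minus, Rle_ge, le_INR, H.
  - rewrite gbinom_nat_above by lia. lra.
Qed.

Lemma ssum_gbinom_nat_le N K : ssum (gbinom (INR N)) K <= 2 ^ N.
Proof.
  revert K; induction N as [|N IH]; intros [|K];
    try (change (ssum _ 0) with 0; apply pow_le; lra).
  - rewrite ssum_Sl, gbinom_0, (ssum_trunc _ 0); [|lia|].
    + change (ssum _ 0) with 0. simpl. lra.
    + intros k _. apply gbinom_nat_above. lia.
  - rewrite ssum_Sl, gbinom_0, S_INR.
    rewrite (ssum_ext _ (fun k => gbinom (INR N) (S k) + gbinom (INR N) k))
      by (intros k _; apply gbinom_pascal).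
    rewrite ssum_plus. pose proof (IH (S K)) as H1. pose proof (IH K) as H2.
    rewrite ssum_Sl, gbinom_0 in H1. simpl. lra.
Qed.

Lemma ln_le_compat x y : 0 < x -> x <= y -> ln x <= ln y.
Proof. intros Hx [H|H]; [left; apply ln_increasing; assumption|subst; lra]. Qed.

Lemma exp_le_compat x y : x <= y -> exp x <= exp y.
Proof. intros [H|H]; [left; apply exp_increasing; assumption|subst; lra]. Qed.

Lemma one_sub_div_le_exp b y : 0 <= b -> 0 < y ->
  1 - b / y <= exp (- b * (ln (y + 1) - ln y)).
Proof.
  intros Hb Hy.
  assert (Hln : ln (y + 1) - ln y <= / y).
  { assert (Hle : y + 1 <= y * exp (/ y)).
    { pose proof (exp_ineq1_le (/ y)).
      replace (y + 1) with (y * (1 + / y)) by (field; lra).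
      apply Rmult_le_compat_l; lra. }
    apply ln_le_compat in Hle; [|lra].
    rewrite ln_mult, ln_exp in Hle by (try apply exp_pos; lra). lra. }
  pose proof (exp_ineq1_le (- (b / y))).
  apply Rle_trans with (exp (- (b / y))); [lra|].
  apply exp_le_compat. unfold Rdiv. nra.
Qed.

Definition harm_prod (b : R) (lo len : nat) : R :=
  fold_right Rmult 1 (map (fun m => 1 - b / INR m) (seq lo len)).

Lemma harm_prod_succ_r b lo len :
  harm_prod b lo (S len) = harm_prod b lo len * (1 - b / INR (lo + len)).
Proof.
  unfold harm_prod. rewrite seq_S, map_app, fold_right_app. simpl.
  generalize (map (fun m => 1 - b / INR m) (seq lo len)) as l.
  induction l as [|x l IH]; simpl; [ring|rewrite IH; ring].
Qed.

Lemma harm_prod_bounds b lo len : (1 <= lo)%nat -> 0 <= b <= 1 ->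
  0 <= harm_prod b lo len <= exp (- b * (ln (INR (lo + len)) - ln (INR lo))).
Proof.
  revert lo; induction len as [|len IH]; intros lo Hlo Hb.
  - rewrite Nat.add_0_r, Rminus_diag, Rmult_0_r, exp_0. unfold harm_prod; simpl; lra.
  - change (harm_prod b lo (S len)) with ((1 - b / INR lo) * harm_prod b (S lo) len).
    destruct (IH (S lo) ltac:(lia) Hb) as [H0 H1].
    assert (Hl : 1 <= INR lo) by (apply (le_INR 1); assumption).
    assert (Hf : 0 <= 1 - b / INR lo).
    { assert (b / INR lo <= 1); [|lra].
      apply Rmult_le_reg_r with (INR lo); [lra|]. unfold Rdiv.
      rewrite Rmult_assoc, Rinv_l by lra. lra. }
    pose proof (one_sub_div_le_exp b (INR lo) (proj1 Hb) ltac:(lra)) as Hexp.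
    rewrite S_INR in *. replace (lo + S len)%nat with (S lo + len)%nat by lia.
    split; [apply Rmult_le_pos; assumption|].
    replace (- b * (ln (INR (S lo + len)) - ln (INR lo)))
      with (- b * (ln (INR lo + 1) - ln (INR lo))
            + - b * (ln (INR (S lo + len)) - ln (INR lo + 1))) by ring.
    rewrite exp_plus. apply Rmult_le_compat; assumption.
Qed.

Lemma Rabs_gbinom_frac a K : 0 < a < 1 ->
  Rabs (gbinom a (S K)) = a * harm_prod a 1 K / INR (S K).
Proof.
  intros Ha. induction K as [|K IH].
  - rewrite gbinom_S, gbinom_0, Rabs_right; [unfold harm_prod; simpl; field|simpl; lra].
  - assert (1 <= INR (S K)) by (apply (le_INR 1); lia).
    assert (INR (S (S K)) <> 0) by (apply not_0_INR; lia).
    rewrite gbinom_S, harm_prod_succ_r. unfold Rdiv.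
    rewrite !Rabs_mult, Rabs_inv, (Rabs_left1 (a - INR (S K))) by lra.
    rewrite (Rabs_right (INR (S (S K)))) by (apply Rle_ge, pos_INR).
    unfold Rdiv in IH. rewrite IH. replace (1 + K)%nat with (S K) by lia.
    field. split; lra.
Qed.

Lemma ssum_Rabs_gbinom_frac_le a K : 0 < a < 1 ->
  ssum (fun k => Rabs (gbinom a (S k))) K <= 1.
Proof.
  intros Ha.
  assert (E : ssum (fun k => Rabs (gbinom a (S k))) K = 1 - harm_prod a 1 K).
  { induction K as [|K IH]; [unfold ssum, harm_prod; simpl; lra|].
    assert (INR (S K) <> 0) by (apply not_0_INR; lia).
    rewrite ssum_Sr, IH, Rabs_gbinom_frac, harm_prod_succ_r by assumption.
    replace (1 + K)%nat with (S K) by lia. field. assumption. }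
  pose proof (harm_prod_bounds a 1 K ltac:(lia) ltac:(lra)). lra.
Qed.

Lemma gbinom_sub_le n j b c : (j + 2 <= n)%nat -> 0 <= b <= c -> c < 2 ->
  0 <= gbinom (INR n - c) j <= gbinom (INR n) j * harm_prod b (n - j + 1) j.
Proof.
  intros Hj Hb Hc. induction j as [|j IH].
  - rewrite !gbinom_0. unfold harm_prod; simpl; lra.
  - destruct IH as [G0 G1]; [lia|].
    assert (H3 : 3 <= INR n - INR j).
    { rewrite <- minus_INR by lia. replace 3 with (INR 3) by (simpl; ring). apply le_INR. lia. }
    assert (HS : 0 < INR (S j)) by (apply lt_0_INR; lia).
    replace (n - S j + 1)%nat with (n - j)%nat by lia.
    change (harm_prod b (n - j) (S j))
      with ((1 - b / INR (n - j)) * harm_prod b (S (n - j)) j).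
    replace (S (n - j)) with (n - j + 1)%nat by lia.
    rewrite minus_INR by lia. rewrite !gbinom_S.
    replace (gbinom (INR n) j * (INR n - INR j) / INR (S j)
             * ((1 - b / (INR n - INR j)) * harm_prod b (n - j + 1) j))
      with (gbinom (INR n) j * harm_prod b (n - j + 1) j * (INR n - INR j - b) / INR (S j))
      by (field; lra).
    unfold Rdiv. split.
    + apply Rmult_le_pos; [|left; apply Rinv_0_lt_compat; assumption].
      apply Rmult_le_pos; [assumption|lra].
    + apply Rmult_le_compat_r; [left; apply Rinv_0_lt_compat; assumption|].
      apply Rmult_le_compat; lra.
Qed.

Lemma mul_exp_neg_le b L : 0 < L -> b * exp (- (b * L)) <= / (exp 1 * L).
Proof.
  intros HL. pose proof (exp_pos 1) as He. pose proof (exp_pos (b * L)) as Hb.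
  assert (Hge : exp 1 * (b * L) <= exp (b * L)).
  { replace (exp (b * L)) with (exp 1 * exp (b * L - 1))
      by (rewrite <- exp_plus; f_equal; ring).
    pose proof (exp_ineq1_le (b * L - 1)). apply Rmult_le_compat_l; lra. }
  rewrite exp_Ropp.
  assert (HeL : 0 < exp 1 * L) by (apply Rmult_lt_0_compat; assumption).
  apply Rmult_le_reg_r with (exp (b * L) * (exp 1 * L)); [apply Rmult_lt_0_compat; assumption|].
  replace (b * / exp (b * L) * (exp (b * L) * (exp 1 * L))) with (b * (exp 1 * L))
    by (field; apply Rgt_not_eq; exact Hb).
  replace (/ (exp 1 * L) * (exp (b * L) * (exp 1 * L))) with (exp (b * L))
    by (field; split; lra).
  lra.
Qed.

Definition ln_succ_third (n : nat) : R := ln ((INR n + 1) / 3).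

Lemma ln_succ_third_pos n : (3 <= n)%nat -> 0 < ln_succ_third n.
Proof.
  intros Hn. unfold ln_succ_third. rewrite <- ln_1.
  assert (3 <= INR n) by (replace 3 with (INR 3) by (simpl; ring); apply le_INR; assumption).
  apply ln_increasing; lra.
Qed.

(* The factor [j] of [l_i] decays like [((n - j + 1) / (n + 1)) ^ b] and [|binom b k|]
   like [b k ^ (-1 - b)]; when [k >= (n - j) / 2] the two powers combine into
   [((n + 1) / 3) ^ (-b)], and [b x ^ (-b) <= 1 / (e ln x)]. *)
Lemma gbinom_mixed_le n j k b c :
  (3 <= n)%nat -> (j + 2 <= n)%nat -> (1 <= k)%nat -> (n - j <= 2 * k)%nat ->
  0 < b < 1 -> b <= c < 2 ->
  gbinom (INR n - c) j * Rabs (gbinom b k)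
  <= 2 * gbinom (INR n) j / (INR (n - j) * exp 1 * ln_succ_third n).
Proof.
  intros Hn Hj Hk Hnj Hb Hc. destruct k as [|K]; [lia|].
  destruct (gbinom_sub_le n j b c Hj ltac:(lra) ltac:(lra)) as [G0 G1].
  set (P := harm_prod b (n - j + 1) j) in *.
  set (D := harm_prod b 1 K).
  destruct (harm_prod_bounds b (n - j + 1) j ltac:(lia) ltac:(lra)) as [P0 P1].
  destruct (harm_prod_bounds b 1 K ltac:(lia) ltac:(lra)) as [D0 D1].
  fold P in P0, P1. fold D in D0, D1.
  pose proof (gbinom_nat_nonneg n j) as Gn.
  pose proof (ln_succ_third_pos n Hn) as HL.
  pose proof (exp_pos 1) as He.
  assert (HS : 0 < INR (S K)) by (apply lt_0_INR; lia).
  assert (Hnj0 : 0 < INR (n - j)) by (apply lt_0_INR; lia).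
  assert (HPD : P * D <= exp (- (b * ln_succ_third n))).
  { eapply Rle_trans; [apply Rmult_le_compat; eassumption|].
    rewrite <- exp_plus. apply exp_le_compat.
    replace (n - j + 1 + j)%nat with (S n) by lia.
    assert (Hsplit : ln (INR (n - j + 1)) <= ln 3 + ln (INR (1 + K))).
    { assert (0 < INR (1 + K)) by (apply lt_0_INR; lia).
      rewrite <- ln_mult by lra.
      apply ln_le_compat; [apply lt_0_INR; lia|].
      replace 3 with (INR 3) by (simpl; ring). rewrite <- mult_INR. apply le_INR. lia. }
    assert (0 <= INR n) by apply pos_INR.
    unfold ln_succ_third, Rdiv. rewrite ln_mult, ln_Rinv, <- S_INR by lra.
    change (INR 1) with 1. rewrite ln_1. nra. }
  assert (HK : / INR (S K) <= 2 / INR (n - j)).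
  { apply Rmult_le_reg_r with (INR (S K) * INR (n - j)); [nra|].
    replace (/ INR (S K) * (INR (S K) * INR (n - j))) with (INR (n - j)) by (field; lra).
    replace (2 / INR (n - j) * (INR (S K) * INR (n - j))) with (2 * INR (S K)) by (field; lra).
    replace 2 with (INR 2) by (simpl; ring). rewrite <- mult_INR. apply le_INR. lia. }
  rewrite Rabs_gbinom_frac by assumption. fold D.
  apply Rle_trans with (gbinom (INR n) j * P * (b * D / INR (S K))).
  { apply Rmult_le_compat_r; [|assumption].
    unfold Rdiv. apply Rmult_le_pos; [nra|left; apply Rinv_0_lt_compat; assumption]. }
  replace (gbinom (INR n) j * P * (b * D / INR (S K)))
    with (gbinom (INR n) j * (b * (P * D) * / INR (S K))) by (field; lra).
  replace (2 * gbinom (INR n) j / (INR (n - j) * exp 1 * ln_succ_third n))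
    with (gbinom (INR n) j * (/ (exp 1 * ln_succ_third n) * (2 / INR (n - j))))
    by (field; repeat split; lra).
  apply Rmult_le_compat_l; [assumption|].
  apply Rmult_le_compat; [|left; apply Rinv_0_lt_compat; assumption| |assumption].
  - apply Rmult_le_pos; [lra|apply Rmult_le_pos; assumption].
  - eapply Rle_trans; [|apply (mul_exp_neg_le b _ HL)].
    apply Rmult_le_compat_l; [lra|assumption].
Qed.

Lemma lagr_term_le n j i2 i3 a2 a3 :
  (3 <= n)%nat -> (j + i2 + i3 = n)%nat -> (1 <= i2)%nat -> (1 <= i3)%nat ->
  0 < a2 < 1 -> 0 < a3 < 1 ->
  Rabs (gbinom (INR n - a2 - a3) j * gbinom a2 i2 * gbinom a3 i3)
  <= 2 * gbinom (INR n) j / (INR (n - j) * exp 1 * ln_succ_third n)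
     * (Rabs (gbinom a2 i2) + Rabs (gbinom a3 i3)).
Proof.
  intros Hn Hs H2 H3 Ha2 Ha3.
  set (K := 2 * gbinom (INR n) j / (INR (n - j) * exp 1 * ln_succ_third n)).
  replace (INR n - a2 - a3) with (INR n - (a2 + a3)) by ring.
  destruct (gbinom_sub_le n j a2 (a2 + a3) ltac:(lia) ltac:(lra) ltac:(lra)) as [G0 _].
  rewrite !Rabs_mult, (Rabs_right (gbinom _ j)) by lra.
  pose proof (Rabs_pos (gbinom a2 i2)) as A2. pose proof (Rabs_pos (gbinom a3 i3)) as A3.
  destruct (le_lt_dec i2 i3).
  - pose proof (gbinom_mixed_le n j i3 a3 (a2 + a3) Hn ltac:(lia) H3 ltac:(lia) Ha3
                  ltac:(lra)) as H. fold K in H.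
    nra.
  - pose proof (gbinom_mixed_le n j i2 a2 (a2 + a3) Hn ltac:(lia) H2 ltac:(lia) Ha2
                  ltac:(lra)) as H. fold K in H.
    nra.
Qed.

Lemma gbinom_div_le N j : (j + 2 <= N)%nat ->
  gbinom (INR N) j / INR (N - j)
  <= gbinom (INR (S N)) j / INR (S N)
     + 2 * gbinom (INR (S (S N))) j / (INR (S N) * INR (S (S N))).
Proof.
  intros Hj. pose proof (gbinom_nat_nonneg N j) as G0.
  assert (Hm : 2 <= INR N - INR j).
  { rewrite <- minus_INR by lia. replace 2 with (INR 2) by (simpl; ring). apply le_INR. lia. }
  assert (Hx : 0 <= INR N) by apply pos_INR.
  rewrite minus_INR, !S_INR by lia.
  set (x := INR N) in *. set (m := x - INR j) in *.
  (* the shift identity turns every term into [binom N j] times a rational function of [m] *)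
  assert (R1 : gbinom (x + 1) j = (x + 1) * gbinom x j / (m + 1)).
  { rewrite <- gbinom_succ_mul. unfold m in *. field. lra. }
  assert (R2 : gbinom (x + 1 + 1) j = (x + 1 + 1) * gbinom (x + 1) j / (m + 2)).
  { rewrite <- gbinom_succ_mul. unfold m in *. field. lra. }
  rewrite R2, R1.
  assert (D : (x + 1) * gbinom x j / (m + 1) / (x + 1)
              + 2 * ((x + 1 + 1) * ((x + 1) * gbinom x j / (m + 1)) / (m + 2))
                / ((x + 1) * (x + 1 + 1))
              - gbinom x j / m
              = gbinom x j * (m - 2) / (m * (m + 1) * (m + 2)))
    by (field; repeat split; lra).
  assert (0 <= gbinom x j * (m - 2) / (m * (m + 1) * (m + 2))).
  { apply Rmult_le_pos; [apply Rmult_le_pos; lra|].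
    left. apply Rinv_0_lt_compat. repeat apply Rmult_lt_0_compat; lra. }
  lra.
Qed.

Lemma ssum_lagr_row_le n a a2 a3 : (3 <= n)%nat -> 0 < a2 < 1 -> 0 < a3 < 1 ->
  ssum (fun k => Rabs (gbinom (INR n - a2 - a3) a * gbinom a2 (S k)
                       * gbinom a3 (n - a - S k))) (n - a - 1)
  <= 4 / (exp 1 * ln_succ_third n)
     * (gbinom (INR (S n)) a / INR (S n)
        + 2 * gbinom (INR (S (S n))) a / (INR (S n) * INR (S (S n)))).
Proof.
  intros Hn Ha2 Ha3.
  pose proof (ln_succ_third_pos n Hn) as HL. pose proof (exp_pos 1) as He.
  assert (HC : 0 < 4 / (exp 1 * ln_succ_third n))
    by (apply Rdiv_lt_0_compat; [lra|apply Rmult_lt_0_compat; assumption]).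
  assert (HW : 0 <= gbinom (INR (S n)) a / INR (S n)
                    + 2 * gbinom (INR (S (S n))) a / (INR (S n) * INR (S (S n)))).
  { pose proof (gbinom_nat_nonneg (S n) a). pose proof (gbinom_nat_nonneg (S (S n)) a).
    assert (0 < INR (S n)) by (apply lt_0_INR; lia).
    assert (0 < INR (S (S n))) by (apply lt_0_INR; lia).
    unfold Rdiv. apply Rplus_le_le_0_compat; apply Rmult_le_pos;
      try (left; apply Rinv_0_lt_compat); nra. }
  destruct (le_lt_dec (a + 2) n) as [Ha|Ha].
  - set (K := 2 * gbinom (INR n) a / (INR (n - a) * exp 1 * ln_succ_third n)).
    assert (Hna : 0 < INR (n - a)) by (apply lt_0_INR; lia).
    assert (HK : 0 <= K).
    { pose proof (gbinom_nat_nonneg n a). unfold K, Rdiv.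
      apply Rmult_le_pos; [lra|]. left. apply Rinv_0_lt_compat.
      repeat apply Rmult_lt_0_compat; assumption. }
    apply Rle_trans with
      (ssum (fun k => K * (Rabs (gbinom a2 (S k)) + Rabs (gbinom a3 (n - a - S k))))
            (n - a - 1)).
    { apply ssum_le. intros k Hk. apply lagr_term_le; lia || assumption. }
    rewrite ssum_scal, ssum_plus.
    pose proof (ssum_Rabs_gbinom_frac_le a2 (n - a - 1) Ha2) as S2.
    assert (S3 : ssum (fun k => Rabs (gbinom a3 (n - a - S k))) (n - a - 1) <= 1).
    { rewrite ssum_rev, (ssum_ext _ (fun k => Rabs (gbinom a3 (S k)))).
      - apply ssum_Rabs_gbinom_frac_le. assumption.
      - intros k Hk. do 2 f_equal. lia. }
    assert (H2K : 2 * K = 4 / (exp 1 * ln_succ_third n) * (gbinom (INR n) a / INR (n - a)))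
      by (unfold K; field; repeat split; lra).
    pose proof (gbinom_div_le n a Ha) as Hdiv.
    assert (2 * K <= 4 / (exp 1 * ln_succ_third n)
                     * (gbinom (INR (S n)) a / INR (S n)
                        + 2 * gbinom (INR (S (S n))) a / (INR (S n) * INR (S (S n)))))
      by (rewrite H2K; apply Rmult_le_compat_l; lra).
    nra.
  - replace (n - a - 1)%nat with 0%nat by lia.
    change (ssum _ 0) with 0. apply Rmult_le_pos; lra.
Qed.

Lemma ssum_row_bounds_le n : (3 <= n)%nat ->
  ssum (fun a => 4 / (exp 1 * ln_succ_third n)
                 * (gbinom (INR (S n)) a / INR (S n)
                    + 2 * gbinom (INR (S (S n))) a / (INR (S n) * INR (S (S n))))) (S n)
  <= 4 / (exp 1 * ln_succ_third n)
     * (2 ^ (n + 1) / (INR n + 1) + 4 * 2 ^ (n + 1) / ((INR n + 1) * (INR n + 2))).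
Proof.
  intros Hn.
  pose proof (ln_succ_third_pos n Hn) as HL. pose proof (exp_pos 1) as He.
  assert (Hx : 0 <= INR n) by apply pos_INR.
  rewrite ssum_scal. apply Rmult_le_compat_l.
  { left. apply Rdiv_lt_0_compat; [lra|apply Rmult_lt_0_compat; assumption]. }
  unfold Rdiv. rewrite ssum_plus.
  rewrite (ssum_ext _ (fun a => / INR (S n) * gbinom (INR (S n)) a)) by (intros; ring).
  rewrite (ssum_ext (fun a => 2 * gbinom (INR (S (S n))) a * _)
             (fun a => 2 * / (INR (S n) * INR (S (S n))) * gbinom (INR (S (S n))) a))
    by (intros; ring).
  rewrite !ssum_scal.
  pose proof (ssum_gbinom_nat_le (S n) (S n)) as B1.
  pose proof (ssum_gbinom_nat_le (S (S n)) (S n)) as B2.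
  rewrite !S_INR in *.
  replace (2 ^ S (S n)) with (2 * 2 ^ (n + 1)) in B2 by (rewrite Nat.add_1_r; simpl; ring).
  replace (2 ^ S n) with (2 ^ (n + 1)) in B1 by (rewrite Nat.add_1_r; reflexivity).
  assert (0 < / (INR n + 1)) by (apply Rinv_0_lt_compat; lra).
  assert (0 < / ((INR n + 1) * (INR n + 1 + 1)))
    by (apply Rinv_0_lt_compat; apply Rmult_lt_0_compat; lra).
  replace (INR n + 2) with (INR n + 1 + 1) by ring.
  nra.
Qed.

Lemma exp_mul4 x : exp (4 * x) = exp x ^ 4.
Proof. replace (4 * x) with (x + x + x + x) by ring. rewrite !exp_plus. ring. Qed.

Lemma exp_4_ge : 35 <= exp 4.
Proof.
  replace 4 with (4 * (4 * / 4)) at 1 by field. rewrite !exp_mul4.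
  pose proof (exp_ineq1_le (/ 4)) as H.
  apply Rle_trans with (((5 / 4) ^ 4) ^ 4); [simpl; lra|].
  apply pow_incr. split; [simpl; lra|]. apply pow_incr. lra.
Qed.

Lemma ln_sub_one_le x : 4 <= x -> 4 * (ln x - 1) <= 5 * ln ((x + 1) / 3).
Proof.
  intros Hx.
  assert (P : 3 ^ 5 * x ^ 4 <= exp 4 * (x + 1) ^ 5).
  { assert (0 <= x ^ 3) by (apply pow_le; lra).
    assert (0 <= x ^ 4) by (apply pow_le; lra).
    assert (H9 : 9 * x ^ 4 <= (x + 1) ^ 5).
    { replace ((x + 1) ^ 5) with (x ^ 4 * (x + 5) + (10 * x ^ 3 + 10 * x ^ 2 + 5 * x + 1))
        by ring.
      nra. }
    apply Rle_trans with (35 * (x + 1) ^ 5); [simpl; lra|].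
    apply Rmult_le_compat_r; [lra|apply exp_4_ge]. }
  apply ln_le_compat in P; [|assert (0 < x ^ 4) by (apply pow_lt; lra); nra].
  assert (0 < (x + 1) ^ 5) by (apply pow_lt; lra).
  rewrite !ln_mult, ln_exp, !ln_pow in P by (try apply pow_lt; try apply exp_pos; lra).
  unfold Rdiv. rewrite ln_mult, ln_Rinv by lra. simpl INR in P. lra.
Qed.

Lemma final_estimate_le x L P : 4 <= x -> 0 < P -> 0 < ln x - 1 ->
  4 * (ln x - 1) <= 5 * L ->
  4 / (exp 1 * L) * (P / (x + 1) + 4 * P / ((x + 1) * (x + 2)))
  <= 5 * P / (exp 1 * x * (ln x - 1)) * (1 + 15 / (x - 3)).
Proof.
  intros Hx HP Hu HuL. pose proof (exp_pos 1) as He.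
  set (u := ln x - 1) in *.
  assert (HL : 0 < L) by lra.
  set (c := P / (exp 1 * u * L)).
  assert (Hc : 0 < c).
  { apply Rdiv_lt_0_compat; [assumption|repeat apply Rmult_lt_0_compat; assumption]. }
  replace (4 / (exp 1 * L) * (P / (x + 1) + 4 * P / ((x + 1) * (x + 2))))
    with ((4 * u) * (c * ((x + 6) / ((x + 1) * (x + 2)))))
    by (unfold c; field; repeat split; lra).
  replace (5 * P / (exp 1 * x * u) * (1 + 15 / (x - 3)))
    with ((5 * L) * (c * ((x + 12) / (x * (x - 3)))))
    by (unfold c; field; repeat split; lra).
  assert (Hq : (x + 6) / ((x + 1) * (x + 2)) <= (x + 12) / (x * (x - 3))).
  { apply Rmult_le_reg_r with ((x + 1) * (x + 2) * (x * (x - 3)));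
      [repeat apply Rmult_lt_0_compat; lra|].
    replace ((x + 6) / ((x + 1) * (x + 2)) * ((x + 1) * (x + 2) * (x * (x - 3))))
      with ((x + 6) * (x * (x - 3))) by (field; lra).
    replace ((x + 12) / (x * (x - 3)) * ((x + 1) * (x + 2) * (x * (x - 3))))
      with ((x + 12) * ((x + 1) * (x + 2))) by (field; lra).
    nra. }
  assert (0 <= (x + 6) / ((x + 1) * (x + 2))).
  { apply Rlt_le, Rdiv_lt_0_compat; nra. }
  apply Rmult_le_compat; [lra|apply Rmult_le_pos; lra|assumption|].
  apply Rmult_le_compat_l; lra.
Qed.

Lemma lagr_lambda_star n a2 a3 i : (1 <= n)%nat ->
  lagr n i ((INR n - 1 + (1 - a2 - a3)) / INR n) (a2 / INR n) (a3 / INR n)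
  = gbinom (INR n - a2 - a3) (i1 i) * gbinom a2 (i2 i) * gbinom a3 (i3 i).
Proof.
  intros Hn. assert (INR n <> 0) by (apply not_0_INR; lia).
  unfold lagr, lfactor.
  replace (INR n * ((INR n - 1 + (1 - a2 - a3)) / INR n)) with (INR n - a2 - a3)
    by (field; assumption).
  replace (INR n * (a2 / INR n)) with a2 by (field; assumption).
  replace (INR n * (a3 / INR n)) with a3 by (field; assumption).
  reflexivity.
Qed.

Theorem lemma26 (n : nat) (a2 a3 : R) :
  (4 <= n)%nat -> 0 < a2 < 1 -> 0 < a3 < 1 ->
  let a1 := 1 - a2 - a3 in
  let lam1 := (INR n - 1 + a1) / INR n in
  let lam2 := a2 / INR n in
  let lam3 := a3 / INR n in
  sumR (map (fun i => Rabs (lagr n i lam1 lam2 lam3))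
            (filter (fun i => (1 <=? i2 i)%nat && (1 <=? i3 i)%nat) (Iset n)))
  <= 5 * 2 ^ (n + 1) / (exp 1 * INR n * (ln (INR n) - 1))
     * (1 + 15 / (INR n - 3)).
Proof.
  intros Hn Ha2 Ha3 a1 lam1 lam2 lam3. subst a1 lam1 lam2 lam3.
  assert (Hx : 4 <= INR n) by (replace 4 with (INR 4) by (simpl; ring); apply le_INR; lia).
  assert (Hu : 0 < ln (INR n) - 1).
  { assert (H : ln (exp 1) < ln (INR n))
      by (apply ln_increasing; [apply exp_pos|pose proof exp_le_3; lra]).
    rewrite ln_exp in H. lra. }
  rewrite (map_ext _ _ (fun i => f_equal Rabs (lagr_lambda_star n a2 a3 i ltac:(lia)))).
  rewrite sumR_filter_Iset. cbn [i1 i2 i3 fst snd].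
  eapply Rle_trans.
  { apply ssum_le. intros a _. rewrite ssum_window. apply ssum_lagr_row_le; lia || assumption. }
  eapply Rle_trans; [apply ssum_row_bounds_le; lia|].
  apply final_estimate_le; try assumption.
  - apply pow_lt. lra.
  - apply ln_sub_one_le. assumption.
Qed.
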